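(* Let $V_\theta$ be a real vector space of finite dimension $D\ge1$ and let $M\subset V_\theta\times[0,1]$ be a dichotomous item response hypersurface whose associated function $f:V_\theta\to[0,1]$ is not constant. Let $w,w'\in V_\theta$, and let $H_w,H_{w'}\subset V_\theta$ be affine hyperplanes (of dimension $D-1$) with $w\in H_w$, $w'\in H_{w'}$, such that $f$ is constant on $H_w$ and constant on $H_{w'}$. Then $H_w$ and $H_{w'}$ are parallel (i.e. they are translates of the same linear subspace).
   Context: A dichotomous item response hypersurface (IRHS) is a $D=\dim V_\theta$ dimensional smooth submanifold $M$ of $V_\theta\times[0,1]$ such that for any two vectors $v,w\in V_\theta$, the intersection of $(w+\mathbb{R}\cdot v)\times[0,1]$ with $M$ is the graph of a monotonic function $w+\mathbb{R}\cdot v\to[0,1]$, where $w+\mathbb{R}\cdot v=\{w+\lambda v:\lambda\in\mathbb{R}\}$. A function $g:w+\mathbb{R}\cdot v\to[0,1]$ is monotonic if either $g(w+\lambda v)\le g(w+\mu v)$ for all $\lambda\le\mu$, or $g(w+\lambda v)\ge g(w+\mu v)$ for all $\lambda\le\mu$. Taking $v=0$ shows $M$ is the graph of a function $f:V_\theta\to[0,1]$, the associated function. *)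

(* V_theta modelled as 'rV[R]_D for R : realType. *)
From HB Require Import structures.
From mathcomp Require Import all_boot all_order all_algebra.
From mathcomp Require Import classical_sets reals.
Set Implicit Arguments. Unset Strict Implicit. Unset Printing Implicit Defensive.
Import Order.TTheory GRing.Theory Num.Theory.
Local Open Scope ring_scope.
Local Open Scope classical_set_scope.

Definition monotonic_on_line (R : realType) (D : nat) (g : 'rV[R]_D -> R)
  (w v : 'rV[R]_D) : Prop :=
  (forall l m : R, l <= m -> g (w + l *: v) <= g (w + m *: v)) \/
  (forall l m : R, l <= m -> g (w + m *: v) <= g (w + l *: v)).

Definition IRHS (R : realType) (D : nat) (M : set ('rV[R]_D * R)) : Prop :=
  (forall p, M p -> 0 <= p.2 <= 1) /\
  forall w v : 'rV[R]_D, exists g : 'rV[R]_D -> R,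
    (forall (l : R) (y : R), M (w + l *: v, y) <-> y = g (w + l *: v)) /\
    (forall l : R, 0 <= g (w + l *: v) <= 1) /\
    monotonic_on_line g w v.

Definition affine_through (R : realType) (D : nat) (w : 'rV[R]_D)
  (U : {vspace 'rV[R]_D}) : set 'rV[R]_D := [set x | x - w \in U].

Definition constant_on (R : realType) (D : nat) (f : 'rV[R]_D -> R)
  (H : set 'rV[R]_D) : Prop := exists c : R, forall x, H x -> f x = c.

(* If the two hyperplane directions differ they span the whole space, so the
   hyperplanes meet and f takes the same value c on both.  Any point x is then
   the midpoint of a point of H_w and a point of H_w' (decompose x - p along
   U + U', p a common point), and monotonicity of f on the line through these
   two points squeezes f x to c; so f would be constant. *)

From HB Require Import structures.
From mathcomp Require Import all_boot all_order all_algebra.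
From mathcomp Require Import classical_sets reals.
Set Implicit Arguments. Unset Strict Implicit. Unset Printing Implicit Defensive.
Import Order.TTheory GRing.Theory Num.Theory.
Local Open Scope ring_scope.

Lemma hyperplanes_sum_full (K : fieldType) (vT : vectType K)
    (U U' : {vspace vT}) :
  \dim U = (\dim {:vT}).-1 -> \dim U' = (\dim {:vT}).-1 -> U != U' ->
  (U + U' = fullv)%VS.
Proof.
move=> dU dU' neqUU'.
have notU'U : ~~ (U' <= U)%VS.
  by apply: contra neqUU' => U'U; rewrite eq_sym eqEdim U'U dU dU' leqnn.
have ltU : (\dim U < \dim (U + U'))%N.
  rewrite ltn_neqAle dimvS ?addvSl // andbT.
  apply: contra notU'U => /eqP dimUE.
  have /eqP -> : U == (U + U')%VS by rewrite eqEdim addvSl dimUE leqnn.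
  exact: addvSr.
apply/eqP; rewrite eqEdim subvf /=.
by move: ltU; rewrite dU; case: (\dim {:vT}).
Qed.

Section AffineHyperplanes.
Variables (R : realType) (D : nat).
Implicit Types (f : 'rV[R]_D -> R) (w x v : 'rV[R]_D) (U : {vspace 'rV[R]_D}).

Lemma affine_throughD w U x u :
  affine_through w U x -> u \in U -> affine_through w U (x + u).
Proof. by rewrite /affine_through /= addrAC => xU uU; rewrite rpredD. Qed.

Lemma affine_through_meet w w' U U' :
  (U + U' = fullv)%VS ->
  exists p, affine_through w U p /\ affine_through w' U' p.
Proof.
move=> UU'full; have : w - w' \in (U + U')%VS by rewrite UU'full memvf.
case/memv_addP=> u uU [u' u'U ww']; exists (w - u); split.
  by rewrite /affine_through /= addrAC subrr add0r rpredN.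
by rewrite /affine_through /= addrAC ww' addrAC subrr add0r.
Qed.

Lemma IRHS_monotonic_on_line M f :
  IRHS M -> (forall x y, M (x, y) <-> y = f x) ->
  forall w v, monotonic_on_line f w v.
Proof.
move=> [_ M_line] Mf w v; have [g [Mg [_ gmon]]] := M_line w v.
have fg l : f (w + l *: v) = g (w + l *: v) by apply/(Mg l)/Mf.
by case: gmon => gmon; [left | right] => l m lm; rewrite !fg gmon.
Qed.

Lemma monotonic_on_line_squeeze f w v l m n :
  monotonic_on_line f w v -> l <= m <= n ->
  f (w + l *: v) = f (w + n *: v) -> f (w + m *: v) = f (w + l *: v).
Proof.
move=> fmon /andP[lm mn] fln; apply/eqP; rewrite eq_le.
case: fmon => fmon.
- by rewrite (fmon l m lm) andbT fln fmon.
- by rewrite (fmon l m lm) /= fln fmon.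
Qed.

Lemma constant_on_transversal_hyperplanes f w w' U U' :
  (forall w v, monotonic_on_line f w v) -> (U + U' = fullv)%VS ->
  constant_on f (affine_through w U) -> constant_on f (affine_through w' U') ->
  forall x y, f x = f y.
Proof.
move=> fmon UU'full [c fc] [c' fc'].
have [p [pH pH']] := affine_through_meet w w' UU'full.
have cc' : c = c' by rewrite -(fc p pH) (fc' p pH').
suff fxc x : f x = c by move=> x y; rewrite !fxc.
have : x - p \in (U + U')%VS by rewrite UU'full memvf.
case/memv_addP=> u uU [u' u'U xp].
have {xp}-> : x = p + (u + u') by rewrite -xp addrC subrK.
have fH : f (p + (u + u') + -1 *: (u' - u)) = c.
  rewrite scaleN1r opprB -!addrA subrKC fc //.
  by apply: affine_throughD; rewrite ?rpredD.
have fH' : f (p + (u + u') + 1 *: (u' - u)) = c.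
  rewrite scale1r -!addrA [u + _]addrCA subrKC cc' fc' //.
  by apply: affine_throughD; rewrite ?rpredD.
have := monotonic_on_line_squeeze (l := -1) (m := 0) (n := 1)
  (fmon (p + (u + u')) (u' - u)).
rewrite scale0r addr0 fH fH' => /(_ _ erefl) -> //.
by rewrite lerN10 ler01.
Qed.

End AffineHyperplanes.

Theorem lemma5 (R : realType) (D : nat) (M : set ('rV[R]_D * R))
  (f : 'rV[R]_D -> R) (w w' : 'rV[R]_D) (U U' : {vspace 'rV[R]_D}) :
  (0 < D)%N ->
  IRHS M ->
  (forall (x : 'rV[R]_D) (y : R), M (x, y) <-> y = f x) ->
  (exists x y : 'rV[R]_D, f x != f y) ->
  \dim U = D.-1 -> \dim U' = D.-1 ->
  constant_on f (affine_through w U) ->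
  constant_on f (affine_through w' U') ->
  U = U'.
Proof.
move=> _ irhs Mf [x [y fxy]] dU dU' fH fH'.
apply/eqP; apply: contraT => neqUU'.
have dimV : \dim {:'rV[R]_D} = D by rewrite dimvf dim_matrix mul1r.
have UU'full : (U + U' = fullv)%VS by apply: hyperplanes_sum_full; rewrite ?dimV.
have fconst := constant_on_transversal_hyperplanes
  (IRHS_monotonic_on_line irhs Mf) UU'full fH fH'.
by rewrite (fconst x y) eqxx in fxy.
Qed.
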